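(* Let $\mathcal{M}_{\hat A'\hat B'\to\hat A\hat B}$ be a bipartite quantum channel and $\Theta^{\mathrm{PPT}}$ a completely-PPT-preserving superchannel, $\Theta^{\mathrm{PPT}}(\mathcal{M})=\mathcal{P}^{\mathrm{post}}_{A_M\hat A\hat BB_M\to AB}\circ\mathcal{M}\circ\mathcal{P}^{\mathrm{pre}}_{A'B'\to\hat A'\hat B'A_MB_M}$ with $\mathcal{P}^{\mathrm{pre}},\mathcal{P}^{\mathrm{post}}$ completely PPT-preserving channels. Then $$E_\kappa(\mathcal{M})\ge E_\kappa(\Theta^{\mathrm{PPT}}(\mathcal{M})).$$
   Context: $T_X$ is partial transpose on $X$. For a bipartite channel $\mathcal{N}_{A'B'\to AB}$ (Alice: $A',A$; Bob: $B',B$), its Choi operator is $J^{\mathcal{N}}_{L_AABL_B}=\mathcal{N}(|\Upsilon\rangle\langle\Upsilon|_{L_AA'}\otimes|\Upsilon\rangle\langle\Upsilon|_{B'L_B})$ with $|\Upsilon\rangle_{XY}=\sum_i|i\rangle_X|i\rangle_Y$, $L_A\simeq A'$, $L_B\simeq B'$. The $\kappa$-entanglement of $\mathcal{N}$ is $E_\kappa(\mathcal{N})=\log\Gamma_\kappa(\mathcal{N})$, where $\Gamma_\kappa(\mathcal{N})=\inf\{\|\operatorname{Tr}_{AB}Q_{L_AABL_B}\|_\infty: Q_{L_AABL_B}\ge0,\ -T_{BL_B}(Q_{L_AABL_B})\le T_{BL_B}(J^{\mathcal{N}}_{L_AABL_B})\le T_{BL_B}(Q_{L_AABL_B})\}$.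 A bipartite channel is completely PPT-preserving if conjugating it with partial transposes on Bob's input and output systems gives a completely positive map. In the superchannel, Alice holds $A',\hat A',A_M,\hat A,A$; Bob holds $B',\hat B',B_M,\hat B,B$. *)

(* Composite systems are
   indexed by product types. *)
From HB Require Import structures.
From mathcomp Require Import all_boot all_order all_algebra.
Set Implicit Arguments. Unset Strict Implicit. Unset Printing Implicit Defensive.
Import Order.TTheory GRing.Theory Num.Theory.
Local Open Scope ring_scope.

Section QDefs.
Variable C : numClosedFieldType.

Definition op (X : finType) := X -> X -> C.

Definition superop (X Y : finType) := op X -> op Y.

Definition psd (X : finType) (A : op X) : Prop :=
  forall v : X -> C, 0 <= \sum_(x : X) \sum_(y : X) Num.conj (v x) * A x y * v y.

Definition loewner_le (X : finType) (A B : op X) : Prop :=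
  psd (fun x y => B x y - A x y).

Definition opp_op (X : finType) (A : op X) : op X := fun x y => - A x y.

Definition scal_id (X : finType) (t : C) : op X :=
  fun x y => if x == y then t else 0.

Definition trace (X : finType) (A : op X) : C := \sum_(x : X) A x x.

Definition linear_superop (X Y : finType) (N : superop X Y) : Prop :=
  forall (a : C) (A B : op X),
    N (fun x y => a * A x y + B x y) = (fun x y => a * N A x y + N B x y).

(* id_R (x) N *)
Definition ampl (R X Y : finType) (N : superop X Y) : superop (R * X)%type (R * Y)%type :=
  fun Z p q => N (fun i j => Z (p.1, i) (q.1, j)) p.2 q.2.

Definition completely_positive (X Y : finType) (N : superop X Y) : Prop :=
  forall (R : finType) (Z : op (R * X)%type), psd Z -> psd (ampl (R:=R) N Z).

Definition trace_preserving (X Y : finType) (N : superop X Y) : Prop :=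
  forall A : op X, trace (N A) = trace A.

Definition channel (X Y : finType) (N : superop X Y) : Prop :=
  [/\ linear_superop N, completely_positive N & trace_preserving N].

Definition ptB (XA XB : finType) (A : op (XA * XB)%type) : op (XA * XB)%type :=
  fun p q => A (p.1, q.2) (q.1, p.2).

Definition completely_PPT_preserving (XA' XB' XA XB : finType)
    (N : superop (XA' * XB')%type (XA * XB)%type) : Prop :=
  channel N /\ completely_positive (fun Z => ptB (N (ptB Z))).

(* id_{A_M} (x) M (x) id_{B_M}, acting on (Ahat' A_M)(Bhat' B_M) *)
Definition mid_action (Ahi Bhi Aho Bho Am Bm : finType)
    (M : superop (Ahi * Bhi)%type (Aho * Bho)%type) :
    superop ((Ahi * Am) * (Bhi * Bm))%type ((Aho * Am) * (Bho * Bm))%type :=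
  fun W p q =>
    M (fun u v => W ((u.1, p.1.2), (u.2, p.2.2)) ((v.1, q.1.2), (v.2, q.2.2)))
      (p.1.1, p.2.1) (q.1.1, q.2.1).

Definition superchannel_apply (Ai Bi Ahi Bhi Am Bm Aho Bho Ao Bo : finType)
    (Pre : superop (Ai * Bi)%type ((Ahi * Am) * (Bhi * Bm))%type)
    (Post : superop ((Aho * Am) * (Bho * Bm))%type (Ao * Bo)%type)
    (M : superop (Ahi * Bhi)%type (Aho * Bho)%type) : superop (Ai * Bi)%type (Ao * Bo)%type :=
  fun Z => Post (mid_action M (Pre Z)).

(* Choi operator J_{L_A A B L_B}, indexed by (L_A * A) * (B * L_B),
   with L_A = A', L_B = B', unnormalized maximally entangled vectors *)
Definition choi (XA' XB' XA XB : finType) (N : superop (XA' * XB')%type (XA * XB)%type) :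
    op ((XA' * XA) * (XB * XB'))%type :=
  fun p q =>
    N (fun u v => if (u == (p.1.1, p.2.2)) && (v == (q.1.1, q.2.2)) then 1 else 0)
      (p.1.2, p.2.1) (q.1.2, q.2.1).

Definition trAB (XA' XB' XA XB : finType) (Q : op ((XA' * XA) * (XB * XB'))%type) :
    op (XA' * XB')%type :=
  fun p q => \sum_(a : XA) \sum_(b : XB) Q ((p.1, a), (b, p.2)) ((q.1, a), (b, q.2)).

(* feasible Q in the SDP defining Gamma_kappa; ptB here is T_{B L_B} *)
Definition kappa_feasible (XA' XB' XA XB : finType)
    (N : superop (XA' * XB')%type (XA * XB)%type) (Q : op ((XA' * XA) * (XB * XB'))%type) : Prop :=
  [/\ psd Q,
      loewner_le (opp_op (ptB Q)) (ptB (choi N))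
    & loewner_le (ptB (choi N)) (ptB Q)].

(* Values t >= ||Tr_AB Q||_inf for some feasible Q.  For PSD X,
   ||X||_inf = min { t | X <= t 1 }, so Gamma_kappa(N) = inf kappa_vals N. *)
Definition kappa_vals (XA' XB' XA XB : finType)
    (N : superop (XA' * XB')%type (XA * XB)%type) (t : C) : Prop :=
  exists Q, kappa_feasible N Q /\ loewner_le (trAB Q) (scal_id (X := (XA' * XB')%type) t).

Definition lower_bound (S : C -> Prop) (r : C) : Prop :=
  forall t, S t -> r <= t.

(* Gamma_kappa(N1) >= Gamma_kappa(N2), i.e. inf kappa_vals N1 >= inf kappa_vals N2,
   expressed as inclusion of the sets of lower bounds (no completeness of C needed) *)
Definition Gamma_kappa_ge (XA' XB' XA XB YA' YB' YA YB : finType)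
    (N1 : superop (XA' * XB')%type (XA * XB)%type) (N2 : superop (YA' * YB')%type (YA * YB)%type) : Prop :=
  forall r, lower_bound (kappa_vals N2) r -> lower_bound (kappa_vals N1) r.

End QDefs.

(* Let Q be feasible for the SDP defining Gamma_kappa(M), with Tr_AB Q <= t 1.
   Q is the Choi operator of a map M_Q (choi_map Q), and we show that
   Q' := J(Theta(M_Q)) is feasible for Theta(M) with Tr_AB Q' <= t 1, so every
   value attained for M is attained for Theta(M).  Feasibility transfers
   because Q |-> J(Theta(M_Q)) is linear, sends J(M) to J(Theta(M)), preserves
   positivity (Theta(M_Q) is CP when Q >= 0) and commutes with the partial
   transpose T on Bob's systems up to replacing Pre, Post by T Pre T, T Post T,
   which are CP by hypothesis.  The trace bound holds because Post and Pre are
   trace preserving and Pre is completely positive. *)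

From HB Require Import structures.
From mathcomp Require Import all_boot all_order all_algebra.
From mathcomp Require Import ring.
From Stdlib Require Import FunctionalExtensionality.
Set Implicit Arguments. Unset Strict Implicit. Unset Printing Implicit Defensive.
Import Order.TTheory GRing.Theory Num.Theory.
Local Open Scope ring_scope.

Section PositiveOperators.
Variable C : numClosedFieldType.
Implicit Types (X Y I : finType).

Lemma op_ext X (A B : op C X) : (forall x y, A x y = B x y) -> A = B.
Proof. by move=> eqAB; do 2 apply: functional_extensionality => ?; apply: eqAB. Qed.

Definition form X (A : op C X) (u w : X -> C) : C :=
  \sum_x \sum_y (u x)^* * A x y * w y.

Definition basis X (x : X) : X -> C := fun z => if z == x then 1 else 0.

Lemma formDl X (A : op C X) u1 u2 w :
  form A (fun z => u1 z + u2 z) w = form A u1 w + form A u2 w.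
Proof.
rewrite /form -big_split; apply: eq_bigr => x _.
rewrite -big_split; apply: eq_bigr => y _.
by rewrite rmorphD !mulrDl.
Qed.

Lemma formDr X (A : op C X) u w1 w2 :
  form A u (fun z => w1 z + w2 z) = form A u w1 + form A u w2.
Proof.
rewrite /form -big_split; apply: eq_bigr => x _.
rewrite -big_split; apply: eq_bigr => y _.
by rewrite mulrDr.
Qed.

Lemma formZl X (A : op C X) s u w :
  form A (fun z => s * u z) w = s^* * form A u w.
Proof.
rewrite /form big_distrr; apply: eq_bigr => x _.
rewrite big_distrr; apply: eq_bigr => y _.
by rewrite rmorphM /= !mulrA.
Qed.

Lemma formZr X (A : op C X) s u w :
  form A u (fun z => s * w z) = s * form A u w.
Proof.
rewrite /form big_distrr; apply: eq_bigr => x _.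
rewrite big_distrr; apply: eq_bigr => y _.
by rewrite mulrCA.
Qed.

Lemma sum_basis X (x : X) (F : X -> C) : \sum_z basis x z * F z = F x.
Proof.
rewrite (bigD1 x) //= /basis eqxx mul1r big1 ?addr0 // => z /negbTE->.
by rewrite mul0r.
Qed.

Lemma form_basisl X (A : op C X) x w : form A (basis x) w = \sum_y A x y * w y.
Proof.
rewrite /form -(sum_basis x (fun x => \sum_y A x y * w y)).
apply: eq_bigr => z _; rewrite big_distrr; apply: eq_bigr => y _.
by rewrite /basis; case: (z == x); rewrite /= ?rmorph1 ?rmorph0 mulrA.
Qed.

Lemma form_basisr X (A : op C X) u y : form A u (basis y) = \sum_x (u x)^* * A x y.
Proof.
apply: eq_bigr => x _; rewrite -(sum_basis y (fun y => (u x)^* * A x y)).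
by apply: eq_bigr => z _; rewrite mulrC.
Qed.

Lemma form_basis X (A : op C X) x y : form A (basis x) (basis y) = A x y.
Proof.
rewrite form_basisl -(sum_basis y (A x)).
by apply: eq_bigr => z _; rewrite mulrC /basis eq_sym.
Qed.

Lemma psd_diag_ge0 X (A : op C X) x : psd A -> 0 <= A x x.
Proof. by move=> /(_ (basis x)); rewrite -/(form A _ _) form_basis. Qed.

Lemma psd_form_real X (A : op C X) v : psd A -> (form A v v)^* = form A v v.
Proof. by move=> /(_ v) /geC0_conj. Qed.

(* Positive operators are Hermitian: polarise with v = e_x + c e_y, c = 1, 'i. *)
Lemma psd_adjoint X (A : op C X) x y : psd A -> A y x = (A x y)^*.
Proof.
move=> A_psd; set s := A x y; set r := A y x.
have [rx ry] := (geC0_conj (psd_diag_ge0 x A_psd), geC0_conj (psd_diag_ge0 y A_psd)).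
have cross_real c : (c * s + c^* * r)^* = c * s + c^* * r.
  pose v z := basis x z + c * basis y z.
  have -> : c * s + c^* * r = form A v v - A x x - c^* * c * A y y.
    by rewrite !formDl !formDr !formZl !formZr !form_basis -/s -/r; ring.
  by rewrite !rmorphB !rmorphM /= psd_form_real // conjCK rx ry (mulrC c).
have e1 := cross_real 1; have ei := cross_real 'i.
rewrite rmorphD !rmorphM /= conjCK conjC1 !mul1r in e1.
rewrite rmorphD !rmorphM /= conjCK conjCi in ei.
have i2 : 'i * 'i = -1 :> C by rewrite -expr2 sqrCi.
have : (r - s^*) *+ 2 = - (s^* + r^* - (s + r)) - 'i * (-'i * s^* + 'i * r^* - ('i * s + - 'i * r))
                       - ('i * 'i + 1) * (s^* - r^* + s - r) by ring.
rewrite e1 ei i2 !subrr addNr mul0r mulr0 oppr0 !addr0 => /eqP.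
by rewrite mulrn_eq0 subr_eq0 => /eqP.
Qed.

Lemma form_adjoint X (A : op C X) u w : psd A -> form A u w = (form A w u)^*.
Proof.
move=> A_psd; rewrite /form rmorph_sum exchange_big /=; apply: eq_bigr => y _.
rewrite rmorph_sum; apply: eq_bigr => x _.
by rewrite !rmorphM /= conjCK -(psd_adjoint _ _ A_psd); ring.
Qed.

Lemma form_rank_one_update X (A : op C X) a x0 v :
  form (fun x y => A x y - a * (A x x0 * A x0 y)) v v =
  form A v v - a * (form A v (basis x0) * form A (basis x0) v).
Proof.
rewrite form_basisr form_basisl big_distrl big_distrr /form -sumrB.
apply: eq_bigr => x _ /=; rewrite !big_distrr -sumrB; apply: eq_bigr => y _ /=.
ring.
Qed.

Lemma psd_schur X (A : op C X) x0 : psd A -> A x0 x0 != 0 ->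
  psd (fun x y => A x y - (A x0 x0)^-1 * (A x x0 * A x0 y)).
Proof.
move=> A_psd a0 v; rewrite -/(form _ v v) form_rank_one_update.
set a := A x0 x0; set c := form A (basis x0) v.
have ra : a^* = a by apply: geC0_conj; apply: psd_diag_ge0.
have -> : form A v (basis x0) = c^* by rewrite /c -form_adjoint.
have := A_psd (fun z => v z + (- c / a) * basis x0 z); rewrite -/(form A _ _).
rewrite !formDl !formDr !formZl !formZr form_basis -/a -/c.
rewrite (form_adjoint v (basis x0) A_psd) -/c.
have -> : (- c / a)^* = - c^* / a by rewrite rmorphM rmorphN /= fmorphV /= ra.
move/le_trans; apply; rewrite le_eqVlt; apply/orP; left; apply/eqP.
by field.
Qed.

Lemma psd_zero_row X (A : op C X) x0 y : psd A -> A x0 x0 = 0 -> A x0 y = 0.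
Proof.
move=> A_psd a0; apply/eqP/negPn/negP => b0; set b := A x0 y in b0.
have ry : (A y y)^* = A y y by apply: geC0_conj; apply: psd_diag_ge0.
have hb : A y x0 = b^* by rewrite (psd_adjoint _ _ A_psd).
set c := - (A y y + 1) / b^*.
have := A_psd (fun z => c * basis x0 z + basis y z); rewrite -/(form A _ _).
rewrite !formDl !formDr !formZl !formZr !form_basis a0 hb /c.
rewrite rmorphM rmorphN /= fmorphV rmorphD /= ry conjCK conjC1 -/b => c_ge0.
have : 0 <= - (A y y + 2).
  apply: le_trans c_ge0 _; rewrite le_eqVlt; apply/orP; left; apply/eqP.
  by field; rewrite b0 andbT conjC_eq0.
have Ayy2 : 0 < A y y + 2 by apply: ltr_wpDl; [exact: psd_diag_ge0 | rewrite ltr0n].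
by rewrite oppr_ge0 (lt_geF Ayy2).
Qed.

Definition rank_one_decomposition X (A : op C X) (s : seq (C * (X -> C))) :=
  all (fun k => 0 <= k.1) s /\
  forall x y, A x y = \sum_(k <- s) k.1 * (k.2 x * (k.2 y)^*).

(* Induction on a set [S] outside which the rows of [A] vanish: one Schur
   complement step removes a point from [S]. *)
Lemma psd_decomposition_supported X (S : {set X}) (A : op C X) :
  psd A -> (forall x y, x \notin S -> A x y = 0) ->
  exists s, rank_one_decomposition A s.
Proof.
have [n] := ubnP #|S|; elim: n S A => // n IH S A S_lt A_psd A_supp.
have [S0|[x0 x0S]] := set_0Vmem S.
  by exists [::]; split => // x y; rewrite big_nil A_supp // S0 in_set0.
have smaller : (#|S :\ x0| < n)%N by move: S_lt; rewrite (cardsD1 x0) x0S.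
have out_S' x : x \notin S :\ x0 -> x = x0 \/ x \notin S.
  by rewrite in_setD1 negb_and negbK => /orP[/eqP|]; [left|right].
have [a0|a0] := eqVneq (A x0 x0) 0.
  apply: (IH _ A smaller A_psd) => x y /out_S' [->|/A_supp//].
  exact: psd_zero_row.
set a := A x0 x0 in a0.
have schur_supp x y : x \notin S :\ x0 -> A x y - a^-1 * (A x x0 * A x0 y) = 0.
  case/out_S' => [->|xS]; first by rewrite -/a mulrA mulVf // mul1r subrr.
  by rewrite (A_supp x y) // (A_supp x x0) // mul0r mulr0 subrr.
have [s [s_ge0 s_sum]] := IH _ _ smaller (psd_schur A_psd a0) schur_supp.
exists ((a^-1, fun x => A x x0) :: s); split.
  by rewrite /= s_ge0 andbT invr_ge0 psd_diag_ge0.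
move=> x y; rewrite big_cons -s_sum /= (psd_adjoint y x0 A_psd).
ring.
Qed.

Lemma psd_decomposition X (A : op C X) : psd A -> exists s, rank_one_decomposition A s.
Proof.
by move=> A_psd; apply: (psd_decomposition_supported (S := setT)) => // x y; rewrite in_setT.
Qed.

Lemma sum_pair X Y (G : X * Y -> C) : \sum_p G p = \sum_x \sum_y G (x, y).
Proof. by rewrite pair_bigA; apply: eq_bigr => -[]. Qed.

Lemma form_sum_op X (I : Type) (s : seq I) (c : I -> C) (F : I -> op C X) u w :
  form (fun x y => \sum_(k <- s) c k * F k x y) u w = \sum_(k <- s) c k * form (F k) u w.
Proof.
rewrite /form; under [RHS]eq_bigr do rewrite big_distrr.
rewrite [RHS]exchange_big /=; apply: eq_bigr => x _.
under [RHS]eq_bigr do rewrite big_distrr.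
rewrite [RHS]exchange_big /=; apply: eq_bigr => y _.
by rewrite big_distrr big_distrl; apply: eq_bigr => k _ /=; ring.
Qed.

Lemma form_suml X I (A : op C X) (F : I -> X -> C) w :
  form A (fun z => \sum_i F i z) w = \sum_i form A (F i) w.
Proof.
rewrite /form [RHS]exchange_big /=; apply: eq_bigr => x _.
rewrite [RHS]exchange_big /=; apply: eq_bigr => y _.
by rewrite rmorph_sum !big_distrl.
Qed.

Lemma form_sumr X I (A : op C X) (F : I -> X -> C) u :
  form A u (fun z => \sum_i F i z) = \sum_i form A u (F i).
Proof.
rewrite /form [RHS]exchange_big /=; apply: eq_bigr => x _.
rewrite [RHS]exchange_big /=; apply: eq_bigr => y _.
by rewrite big_distrr.
Qed.

Lemma psd_reindex X Y (Z : op C X) (f : Y -> X) :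
  psd Z -> psd (fun a b => Z (f a) (f b)).
Proof.
move=> Z_psd v; have := Z_psd (fun x => \sum_a v a * basis (f a) x).
rewrite -/(form Z _ _) form_suml.
under eq_bigr do rewrite formZl form_sumr big_distrr.
under eq_bigr do under eq_bigr do rewrite formZr form_basis.
move/le_trans; apply; rewrite le_eqVlt; apply/orP; left; apply/eqP.
by apply: eq_bigr => a _; apply: eq_bigr => b _ /=; ring.
Qed.

(* Summing the entries of a positive operator over fibres [g x i], [g y j]
   gives a positive operator: the form is the original one at [v (.).1]. *)
Lemma psd_fibre_sum X I K (P : op C K) (g : X -> I -> K) :
  psd P -> psd (fun x y => \sum_i \sum_j P (g x i) (g y j)).
Proof.
move=> P_psd v; have := psd_reindex (fun a : X * I => g a.1 a.2) P_psd (fun a => v a.1).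
move/le_trans; apply; rewrite le_eqVlt; apply/orP; left; apply/eqP.
rewrite sum_pair; apply: eq_bigr => x _.
under eq_bigr do rewrite sum_pair.
rewrite exchange_big /=; apply: eq_bigr => y _.
rewrite big_distrr big_distrl /=; apply: eq_bigr => i _.
by rewrite big_distrr big_distrl.
Qed.

Lemma form_tensor_rank_one X Y (Z : op C X) (w : Y -> C) (v : X * Y -> C) :
  form (fun a b => Z a.1 b.1 * (w a.2 * (w b.2)^*)) v v =
  form Z (fun x => \sum_y (w y)^* * v (x, y)) (fun x => \sum_y (w y)^* * v (x, y)).
Proof.
rewrite /form sum_pair; apply: eq_bigr => x _.
under eq_bigr do rewrite sum_pair.
rewrite exchange_big /=; apply: eq_bigr => x' _.
rewrite rmorph_sum !big_distrl /=; apply: eq_bigr => y _.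
rewrite !big_distrr /=; apply: eq_bigr => y' _.
by rewrite rmorphM /= conjCK; ring.
Qed.

Lemma psd_tensor X Y (Z : op C X) (W : op C Y) :
  psd Z -> psd W -> psd (fun a b : X * Y => Z a.1 b.1 * W a.2 b.2).
Proof.
move=> Z_psd W_psd v; have [s [s_ge0 W_sum]] := psd_decomposition W_psd.
change (0 <= form (fun a b : X * Y => Z a.1 b.1 * W a.2 b.2) v v).
have -> : (fun a b : X * Y => Z a.1 b.1 * W a.2 b.2) = fun a b =>
    \sum_(k <- s) k.1 * (Z a.1 b.1 * (k.2 a.2 * (k.2 b.2)^*)).
  by apply: op_ext => a b; rewrite W_sum big_distrr; apply: eq_bigr => k _ /=; ring.
rewrite (form_sum_op s (fun k => k.1) (fun k a b => Z a.1 b.1 * (k.2 a.2 * (k.2 b.2)^*))).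
elim: s s_ge0 {W_sum} => [|k s IH]; first by rewrite big_nil.
rewrite big_cons /= => /andP[k_ge0 s_ge0]; apply: addr_ge0 (IH s_ge0).
by rewrite form_tensor_rank_one; apply: mulr_ge0 k_ge0 (Z_psd _).
Qed.

Lemma psd_rank_one X (v : X -> C) : psd (fun x y => (v x)^* * v y).
Proof.
move=> w; change (0 <= form (fun x y => (v x)^* * v y) w w).
have -> : form (fun x y => (v x)^* * v y) w w = (\sum_x v x * w x)^* * \sum_y v y * w y.
  rewrite /form rmorph_sum big_distrl; apply: eq_bigr => x _.
  rewrite big_distrr; apply: eq_bigr => y _ /=.
  by rewrite rmorphM /=; ring.
by rewrite mulrC mul_conjC_ge0.
Qed.

End PositiveOperators.

Section ChoiOperators.
Variable C : numClosedFieldType.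
Implicit Types (X Y I : finType).

Lemma cp_psd X Y (N : superop C X Y) (Z : op C X) :
  completely_positive N -> psd Z -> psd (N Z).
Proof.
move=> N_cp Z_psd.
have := N_cp unit _ (psd_reindex (fun a : unit * X => a.2) Z_psd).
exact: psd_reindex (fun y : Y => (tt, y)).
Qed.

Definition matrix_unit X (i j : X) : op C X :=
  fun u v => if (u == i) && (v == j) then 1 else 0.

Lemma op_expand X (A : op C X) :
  A = fun u v => \sum_(r : X * X) A r.1 r.2 * matrix_unit r.1 r.2 u v.
Proof.
apply: op_ext => u v; rewrite sum_pair -(sum_basis u (fun i => A i v)).
apply: eq_bigr => i _; rewrite -(sum_basis v (A i)) big_distrr; apply: eq_bigr => j _.
rewrite /matrix_unit /basis [u == i]eq_sym [v == j]eq_sym.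
by case: (i == u); case: (j == v); rewrite /= ?mulr1 ?mulr0 ?mul1r ?mul0r.
Qed.

Lemma linear_sum X Y I (N : superop C X Y) (c : I -> C) (F : I -> op C X) :
  linear_superop N ->
  N (fun u v => \sum_i c i * F i u v) = fun x y => \sum_i c i * N (F i) x y.
Proof.
move=> N_lin.
have N0 x y : N (fun _ _ => 0) x y = 0.
  have := congr1 (fun A => A x y) (N_lin 1 (fun _ _ => 0) (fun _ _ => 0)).
  have -> : (fun x y : X => 1 * (fun _ _ => 0 : C) x y + 0) = (fun _ _ => 0).
    by apply: op_ext => ? ?; rewrite mulr0 addr0.
  by rewrite /= mul1r => /esym /(canRL (addrK _)); rewrite subrr.
suff sum_seq (r : seq I) : N (fun u v => \sum_(i <- r) c i * F i u v) =
    fun x y => \sum_(i <- r) c i * N (F i) x y by [].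
elim: r => [|i r IH].
  have -> : (fun u v : X => \sum_(i <- [::]) c i * F i u v) = fun _ _ => 0.
    by apply: op_ext => ? ?; rewrite big_nil.
  by apply: op_ext => x y; rewrite N0 big_nil.
have -> : (fun u v : X => \sum_(j <- i :: r) c j * F j u v) =
    fun u v => c i * F i u v + (fun u v => \sum_(j <- r) c j * F j u v) u v.
  by apply: op_ext => ? ?; rewrite big_cons.
by rewrite N_lin IH; apply: op_ext => x y; rewrite big_cons.
Qed.

Section BipartiteChoi.
Variables XA' XB' XA XB : finType.

Definition choi_index (i : XA' * XB') (o : XA * XB) : ((XA' * XA) * (XB * XB'))%type :=
  ((i.1, o.1), (o.2, i.2)).

(* The map whose Choi operator is [Q]: W |-> Tr_{L_A L_B}[(W^T (x) 1) Q]. *)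
Definition choi_map (Q : op C ((XA' * XA) * (XB * XB'))%type) :
    superop C (XA' * XB')%type (XA * XB)%type :=
  fun W o o' => \sum_i \sum_j W i j * Q (choi_index i o) (choi_index j o').

Lemma choi_mapK (N : superop C (XA' * XB')%type (XA * XB)%type) :
  linear_superop N -> choi_map (choi N) = N.
Proof.
move=> N_lin; apply: functional_extensionality => W.
rewrite [in RHS](op_expand W) linear_sum //; apply: op_ext => -[o1 o2] -[o1' o2'].
rewrite /choi_map [RHS]sum_pair.
by apply: eq_bigr => -[i1 i2] _; apply: eq_bigr => -[j1 j2] _.
Qed.

Lemma choi_map_cp (Q : op C ((XA' * XA) * (XB * XB'))%type) :
  psd Q -> completely_positive (choi_map Q).
Proof.
move=> Q_psd R Z Z_psd.
exact: psd_fibre_sum (fun p i => ((p.1, i), choi_index i p.2)) (psd_tensor Z_psd Q_psd).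
Qed.

End BipartiteChoi.

Definition max_entangled (R : finType) : op C (R * R)%type :=
  fun a b => if (a.2 == a.1) && (b.2 == b.1) then 1 else 0.

(* |Upsilon><Upsilon| is rank one, hence positive. *)
Lemma psd_max_entangled (R : finType) : psd (@max_entangled R).
Proof.
pose ups (a : R * R) : C := if a.2 == a.1 then 1 else 0.
have := psd_rank_one ups; congr psd; apply: op_ext => a b.
by rewrite /max_entangled /ups; case: (a.2 == a.1); case: (b.2 == b.1);
  rewrite /= ?rmorph1 ?rmorph0 ?mulr1 ?mulr0.
Qed.

Lemma choi_psd (XA' XB' XA XB : finType) (N : superop C (XA' * XB')%type (XA * XB)%type) :
  completely_positive N -> psd (choi N).
Proof.
move=> N_cp; have := N_cp _ _ (@psd_max_entangled (XA' * XB')%type).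
exact: psd_reindex (fun p : (XA' * XA) * (XB * XB') => ((p.1.1, p.2.2), (p.1.2, p.2.1))).
Qed.

End ChoiOperators.

Section PartialTranspose.
Variable C : numClosedFieldType.
Variables XA' XB' XA XB : finType.

Definition ptB_conj (X Y Z W : finType) (N : superop C (X * Y)%type (Z * W)%type) :
    superop C (X * Y)%type (Z * W)%type :=
  fun A => ptB (N (ptB A)).

Lemma ptBK (X Y : finType) (A : op C (X * Y)%type) : ptB (ptB A) = A.
Proof. by apply: op_ext => -[a b] -[c d]. Qed.

Lemma choi_ptB (N : superop C (XA' * XB')%type (XA * XB)%type) :
  ptB (choi N) = choi (ptB_conj N).
Proof.
apply: op_ext => -[[p1 p2] [p3 p4]] -[[q1 q2] [q3 q4]].
rewrite /ptB_conj /ptB /choi /=; congr (N _ _ _).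
apply: op_ext => -[u1 u2] -[v1 v2] /=; rewrite !xpair_eqE.
by case: (u1 == p1); case: (u2 == q4); case: (v1 == q1); case: (v2 == p4).
Qed.

Lemma ptB_conj_choi_map (Q : op C ((XA' * XA) * (XB * XB'))%type) :
  ptB_conj (choi_map Q) = choi_map (ptB Q).
Proof.
apply: functional_extensionality => W; apply: op_ext => -[o1 o2] -[o1' o2'].
rewrite /ptB_conj /ptB /choi_map /= !pair_bigA /=.
pose swap (r : (XA' * XB') * (XA' * XB')) := ((r.1.1, r.2.2), (r.2.1, r.1.2)).
have swapK : involutive swap by move=> [[a b] [c d]].
rewrite (reindex_inj (inv_inj swapK)) /=.
by apply: eq_bigr => -[[a b] [c d]] _.
Qed.

End PartialTranspose.

Section Superchannel.
Variable C : numClosedFieldType.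
Variables Ai Bi Ahi Bhi Am Bm Aho Bho Ao Bo : finType.
Implicit Types (Pre : superop C (Ai * Bi)%type ((Ahi * Am) * (Bhi * Bm))%type)
  (Post : superop C ((Aho * Am) * (Bho * Bm))%type (Ao * Bo)%type)
  (N : superop C (Ahi * Bhi)%type (Aho * Bho)%type)
  (Q : op C ((Ahi * Aho) * (Bho * Bhi))%type).

Lemma mid_action_cp N :
  completely_positive N -> completely_positive (mid_action (Am := Am) (Bm := Bm) N).
Proof.
move=> N_cp R Z Z_psd.
pose split_in (a : (R * (Am * Bm)) * (Ahi * Bhi)) :=
  (a.1.1, ((a.2.1, a.1.2.1), (a.2.2, a.1.2.2))).
pose join_out (p : R * ((Aho * Am) * (Bho * Bm))) :=
  ((p.1, (p.2.1.2, p.2.2.2)), (p.2.1.1, p.2.2.1)).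
exact: psd_reindex join_out (N_cp _ _ (psd_reindex split_in Z_psd)).
Qed.

Lemma superchannel_cp Pre Post N :
  completely_positive Pre -> completely_positive Post -> completely_positive N ->
  completely_positive (superchannel_apply Pre Post N).
Proof.
move=> Pre_cp Post_cp N_cp R Z Z_psd.
exact: Post_cp _ _ (mid_action_cp N_cp (Pre_cp _ _ Z_psd)).
Qed.

Lemma ptB_mid_action N (W : op C ((Ahi * Am) * (Bhi * Bm))%type) :
  ptB (mid_action N W) = mid_action (ptB_conj N) (ptB W).
Proof. by []. Qed.

Lemma ptB_conj_superchannel Pre Post N :
  ptB_conj (superchannel_apply Pre Post N) =
  superchannel_apply (ptB_conj Pre) (ptB_conj Post) (ptB_conj N).
Proof.
apply: functional_extensionality => Z.
by rewrite /ptB_conj /superchannel_apply -/(ptB_conj N) -ptB_mid_action !ptBK.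
Qed.

(* The linear map Q |-> J(Theta(M_Q)), where M_Q is the map with Choi operator Q;
   it sends the Choi operator of M to that of Theta(M). *)
Definition theta_choi Pre Post Q : op C ((Ai * Ao) * (Bo * Bi))%type :=
  choi (superchannel_apply Pre Post (choi_map Q)).

(* Q |-> J(Theta(M_Q)) is linear, since M_Q is linear in Q and Post is linear. *)
Lemma theta_choi_linear Pre Post :
  linear_superop Post -> linear_superop (theta_choi Pre Post).
Proof.
move=> Post_lin a Q1 Q2; apply: op_ext => p q.
have mid_lin W :
    mid_action (Am := Am) (Bm := Bm) (choi_map (fun x y => a * Q1 x y + Q2 x y)) W =
    fun x y => a * mid_action (choi_map Q1) W x y + mid_action (choi_map Q2) W x y.
  apply: op_ext => x y; rewrite /mid_action /choi_map big_distrr -big_split.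
  apply: eq_bigr => i _ /=; rewrite big_distrr -big_split.
  by apply: eq_bigr => j _ /=; ring.
by rewrite /theta_choi /choi /superchannel_apply mid_lin Post_lin.
Qed.

(* Q >= 0 implies J(Theta(M_Q)) >= 0: M_Q and hence Theta(M_Q) are CP. *)
Lemma theta_choi_psd Pre Post Q :
  completely_positive Pre -> completely_positive Post -> psd Q -> psd (theta_choi Pre Post Q).
Proof.
move=> Pre_cp Post_cp Q_psd.
exact/choi_psd/superchannel_cp/choi_map_cp.
Qed.

Lemma theta_choi_ptB_psd Pre Post Q :
  completely_PPT_preserving Pre -> completely_PPT_preserving Post ->
  psd (ptB Q) -> psd (ptB (theta_choi Pre Post Q)).
Proof.
move=> [_ Pre_ppt] [_ Post_ppt] Q_ppt.
rewrite /theta_choi choi_ptB ptB_conj_superchannel ptB_conj_choi_map.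
exact: theta_choi_psd.
Qed.

End Superchannel.

Section KappaFeasibility.
Variable C : numClosedFieldType.

(* The two SDP constraints -T(Q) <= T(J) <= T(Q) say that T(Q + J) and
   T(Q - J) are positive, where T is the partial transpose on Bob's systems. *)
Lemma loewner_ptB_lower (X Y : finType) (J Q : op C (X * Y)%type) :
  loewner_le (opp_op (ptB Q)) (ptB J) = psd (ptB (fun x y => 1 * J x y + Q x y)).
Proof. by congr psd; apply: op_ext => x y; rewrite /ptB /opp_op mul1r opprK. Qed.

Lemma loewner_ptB_upper (X Y : finType) (J Q : op C (X * Y)%type) :
  loewner_le (ptB J) (ptB Q) = psd (ptB (fun x y => -1 * J x y + Q x y)).
Proof. by congr psd; apply: op_ext => x y; rewrite /ptB mulN1r addrC. Qed.

Lemma kappa_feasible_map (XA' XB' XA XB YA' YB' YA YB : finType)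
    (F : superop C ((XA' * XA) * (XB * XB'))%type ((YA' * YA) * (YB * YB'))%type)
    (N : superop C (XA' * XB')%type (XA * XB)%type)
    (N' : superop C (YA' * YB')%type (YA * YB)%type) Q :
  linear_superop F -> (forall X, psd X -> psd (F X)) ->
  (forall X, psd (ptB X) -> psd (ptB (F X))) ->
  F (choi N) = choi N' -> kappa_feasible N Q -> kappa_feasible N' (F Q).
Proof.
move=> F_lin F_psd F_ppt FJ [Q_psd lower upper]; rewrite /kappa_feasible -FJ.
have transfer s : psd (ptB (fun x y => s * choi N x y + Q x y)) ->
    psd (ptB (fun x y => s * F (choi N) x y + F Q x y)).
  by rewrite -F_lin; apply: F_ppt.
split; first exact: F_psd.
- by rewrite loewner_ptB_lower; apply: transfer; rewrite -loewner_ptB_lower.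
- by rewrite loewner_ptB_upper; apply: transfer; rewrite -loewner_ptB_upper.
Qed.

End KappaFeasibility.

Section TraceBound.
Variable C : numClosedFieldType.
Variables Am Bm : finType.

Definition join_index (A B : finType) (i : A * B) (m : Am * Bm) : ((A * Am) * (B * Bm))%type :=
  ((i.1, m.1), (i.2, m.2)).

Lemma sum_join_index (A B : finType) (G : (A * Am) * (B * Bm) -> C) :
  \sum_x G x = \sum_m \sum_i G (join_index i m).
Proof.
rewrite (reindex (fun y : (Am * Bm) * (A * B) => join_index y.2 y.1)).
  by rewrite pair_bigA; apply: eq_bigr => -[m i].
apply: onW_bij; exists (fun x : (A * Am) * (B * Bm) => ((x.1.2, x.2.2), (x.1.1, x.2.1))).
  by move=> [[a b] [c d]].
by move=> [[a b] [c d]].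
Qed.

Section Pairing.
Variables Ahi Bhi : finType.

(* The pairing W |-> Tr[(D^T (x) 1_M) W] of an operator D on Ahi Bhi with an
   operator W on (Ahi A_M)(Bhi B_M). *)
Definition memory_pairing (D : op C (Ahi * Bhi)%type)
    (W : op C ((Ahi * Am) * (Bhi * Bm))%type) : C :=
  \sum_m \sum_i \sum_j W (join_index i m) (join_index j m) * D i j.

Lemma memory_pairing_ge0 D W : psd D -> psd W -> 0 <= memory_pairing D W.
Proof.
move=> D_psd W_psd; apply: sumr_ge0 => m _.
have := psd_fibre_sum (fun (m : Am * Bm) (i : Ahi * Bhi) => (join_index i m, i))
  (psd_tensor W_psd D_psd).
exact: psd_diag_ge0.
Qed.

Lemma memory_pairingB D1 D2 W :
  memory_pairing (fun i j => D1 i j - D2 i j) W = memory_pairing D1 W - memory_pairing D2 W.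
Proof.
rewrite /memory_pairing -sumrB; apply: eq_bigr => m _.
rewrite -sumrB; apply: eq_bigr => i _.
by rewrite -sumrB; apply: eq_bigr => j _; rewrite mulrBr.
Qed.

Lemma memory_pairing_sum D (I : finType) (c : I -> C)
    (F : I -> op C ((Ahi * Am) * (Bhi * Bm))%type) :
  memory_pairing D (fun x y => \sum_r c r * F r x y) = \sum_r c r * memory_pairing D (F r).
Proof.
rewrite /memory_pairing; under [RHS]eq_bigr do rewrite big_distrr.
rewrite [RHS]exchange_big; apply: eq_bigr => m _.
under [RHS]eq_bigr do rewrite big_distrr.
rewrite [RHS]exchange_big; apply: eq_bigr => i _.
under [RHS]eq_bigr do rewrite big_distrr.
rewrite [RHS]exchange_big; apply: eq_bigr => j _.
by rewrite big_distrl; apply: eq_bigr => r _ /=; rewrite mulrA.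
Qed.

Lemma memory_pairing_scal_id t W : memory_pairing (scal_id t) W = t * trace W.
Proof.
rewrite /trace sum_join_index big_distrr; apply: eq_bigr => m _.
rewrite big_distrr; apply: eq_bigr => i _ /=.
rewrite (bigD1 i) //= big1 => [|j ji]; first by rewrite addr0 /scal_id eqxx mulrC.
by rewrite /scal_id eq_sym (negbTE ji) mulr0.
Qed.

Lemma trace_mid_choi_map (Aho Bho : finType) (Q : op C ((Ahi * Aho) * (Bho * Bhi))%type) W :
  trace (mid_action (Am := Am) (Bm := Bm) (choi_map Q) W) = memory_pairing (trAB Q) W.
Proof.
rewrite /trace sum_join_index; apply: eq_bigr => m _.
rewrite sum_pair /mid_action /choi_map.
under eq_bigr => a _ do rewrite exchange_big.
under eq_bigr => a _ do under eq_bigr => i _ do rewrite exchange_big.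
rewrite exchange_big; apply: eq_bigr => i _.
rewrite exchange_big; apply: eq_bigr => j _.
rewrite /trAB big_distrr; apply: eq_bigr => a _.
by rewrite big_distrr.
Qed.

End Pairing.

End TraceBound.

Lemma trAB_choi (C : numClosedFieldType) (XA' XB' XA XB : finType)
    (N : superop C (XA' * XB')%type (XA * XB)%type) p1 p2 q1 q2 :
  trAB (choi N) (p1, p2) (q1, q2) = trace (N (matrix_unit C (p1, p2) (q1, q2))).
Proof. by rewrite /trAB /trace sum_pair. Qed.

Lemma trace_matrix_unit (C : numClosedFieldType) (X : finType) (p q : X) :
  trace (matrix_unit C p q) = scal_id 1 p q.
Proof.
rewrite /trace /matrix_unit /scal_id; case: (eqVneq p q) => [<-|pq].
  by rewrite (bigD1 p) //= eqxx big1 ?addr0 // => u /negbTE->.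
by apply: big1 => u _; case: (eqVneq u p) => [->|//]; rewrite (negbTE pq).
Qed.

(* If Tr_AB Q <= t 1, the same bound holds for J(Theta(M_Q)): since Post is
   trace preserving, the entries of t 1 - Tr_AB J(Theta(M_Q)) are pairings of
   t 1 - Tr_AB Q with Pre(|p><q|), so its form at v is a pairing with the
   positive operator Pre(v^* v). *)
Lemma theta_choi_trace_bound (C : numClosedFieldType)
    (Ai Bi Ahi Bhi Am Bm Aho Bho Ao Bo : finType)
    (Pre : superop C (Ai * Bi)%type ((Ahi * Am) * (Bhi * Bm))%type)
    (Post : superop C ((Aho * Am) * (Bho * Bm))%type (Ao * Bo)%type)
    (Q : op C ((Ahi * Aho) * (Bho * Bhi))%type) t :
  channel Pre -> trace_preserving Post ->
  loewner_le (trAB Q) (scal_id t) -> loewner_le (trAB (theta_choi Pre Post Q)) (scal_id t).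
Proof.
move=> [Pre_lin Pre_cp Pre_tp] Post_tp D_psd.
set D := fun i j => scal_id t i j - trAB Q i j.
have entry p q : scal_id t p q - trAB (theta_choi Pre Post Q) p q =
    memory_pairing D (Pre (matrix_unit C p q)).
  case: p q => [p1 p2] [q1 q2].
  rewrite memory_pairingB memory_pairing_scal_id -trace_mid_choi_map.
  rewrite /theta_choi trAB_choi /superchannel_apply Post_tp Pre_tp trace_matrix_unit.
  by rewrite /scal_id; case: (_ == _); rewrite ?mulr1 ?mulr0.
move=> v; under eq_bigr do under eq_bigr do rewrite entry.
pose V u u' := (v u)^* * v u'.
have -> : \sum_p \sum_q (v p)^* * memory_pairing D (Pre (matrix_unit C p q)) * v q =
    memory_pairing D (Pre V).
  rewrite [in RHS](op_expand V) linear_sum // memory_pairing_sum [RHS]sum_pair.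
  by apply: eq_bigr => p _; apply: eq_bigr => q _; rewrite /V /=; ring.
exact: memory_pairing_ge0 D_psd (cp_psd Pre_cp (psd_rank_one v)).
Qed.

Theorem mainTheorem10 (C : numClosedFieldType)
    (Ai Bi Ahi Bhi Am Bm Aho Bho Ao Bo : finType)
    (M : superop C (Ahi * Bhi)%type (Aho * Bho)%type)
    (Pre : superop C (Ai * Bi)%type ((Ahi * Am) * (Bhi * Bm))%type)
    (Post : superop C ((Aho * Am) * (Bho * Bm))%type (Ao * Bo)%type) :
  channel M ->
  completely_PPT_preserving Pre ->
  completely_PPT_preserving Post ->
  Gamma_kappa_ge M (superchannel_apply Pre Post M).
Proof.
move=> [M_lin _ _] Pre_ppt Post_ppt r r_lb t [Q [Q_feasible Q_bound]]; apply: r_lb.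
have [Pre_channel _] := Pre_ppt; have [_ Pre_cp _] := Pre_channel.
have [[Post_lin Post_cp Post_tp] _] := Post_ppt.
exists (theta_choi Pre Post Q); split.
- apply: kappa_feasible_map Q_feasible.
  + exact: theta_choi_linear.
  + by move=> X; apply: theta_choi_psd.
  + by move=> X; apply: theta_choi_ptB_psd.
  + by rewrite /theta_choi choi_mapK.
- exact: theta_choi_trace_bound Pre_channel Post_tp Q_bound.
Qed.
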